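(* Let $N=\{1,\dots,n\}$ and let $F:2^N\to\mathbb{R}$ be quasi-submodular. Suppose the maximization procedure (described in the context) outputs the lattice $[X_+,Y_+]$. Then every global maximizer of $F$ lies in $[X_+,Y_+]$, i.e., for every $X_*\in\arg\max_{X\subseteq N}F(X)$ we have $X_+\subseteq X_*\subseteq Y_+$.
   Context: For $A\subseteq N$ and $i\in N$, write $A+i=A\cup\{i\}$, $A-i=A\setminus\{i\}$, and $F(i\mid A)=F(A+i)-F(A)$. A set function $F:2^N\to\mathbb{R}$ is quasi-submodular if for all $X,Y\subseteq N$ both hold: $F(X\cap Y)\ge F(X)\Rightarrow F(Y)\ge F(X\cup Y)$, and $F(X\cap Y)>F(X)\Rightarrow F(Y)>F(X\cup Y)$. For sets $A,B$, $[A,B]=\{U: A\subseteq U\subseteq B\}$. Maximization procedure: set $X_0=\emptyset$, $Y_0=N$; for $t=0,1,2,\dots$: let $U_t=\{u\in Y_t\setminus X_t: F(u\mid Y_t-u)>0\}$ and $X_{t+1}=X_t\cup U_t$; let $D_t=\{d\in Y_t\setminus X_t: F(d\mid X_t)<0\}$ and $Y_{t+1}=Y_t\setminus D_t$; if $X_{t+1}=X_t$ and $Y_{t+1}=Y_t$, stop and output the lattice $[X_t,Y_t]$; otherwise continue with $t+1$. *)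

From mathcomp Require Import all_boot all_order all_algebra.
From mathcomp Require Import reals.
Set Implicit Arguments. Unset Strict Implicit. Unset Printing Implicit Defensive.
Import Order.TTheory GRing.Theory Num.Theory.
Local Open Scope ring_scope.

(* Ground set N = {0,...,n-1} represented by 'I_n; subsets are {set 'I_n}. *)

Definition marg {T : finType} {R : numDomainType} (F : {set T} -> R) (i : T) (A : {set T}) : R :=
  F (i |: A) - F A.

Definition quasi_submodular {T : finType} {R : numDomainType} (F : {set T} -> R) : Prop :=
  forall X Y : {set T},
    (F (X :&: Y) >= F X -> F Y >= F (X :|: Y)) /\
    (F (X :&: Y) > F X -> F Y > F (X :|: Y)).

Definition proc_step {T : finType} {R : numDomainType} (F : {set T} -> R)
  (XY : {set T} * {set T}) : {set T} * {set T} :=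
  let X := XY.1 in let Y := XY.2 in
  let U := [set u in Y :\: X | marg F u (Y :\ u) > 0] in
  let D := [set d in Y :\: X | marg F d X < 0] in
  (X :|: U, Y :\: D).

Definition proc_iter {T : finType} {R : numDomainType} (F : {set T} -> R) (t : nat)
  : {set T} * {set T} := iter t (proc_step F) (set0, setT).

Definition proc_outputs {T : finType} {R : numDomainType} (F : {set T} -> R)
  (Xp Yp : {set T}) : Prop :=
  exists t : nat,
    proc_iter F t = (Xp, Yp) /\
    (forall s : nat, (s < t)%N -> proc_step F (proc_iter F s) != proc_iter F s) /\
    proc_step F (Xp, Yp) = (Xp, Yp).

Definition is_global_max {T : finType} {R : numDomainType} (F : {set T} -> R) (X : {set T}) : Prop :=
  forall Z : {set T}, F Z <= F X.

From mathcomp Require Import all_boot all_order all_algebra.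
From mathcomp Require Import reals.
Set Implicit Arguments. Unset Strict Implicit. Unset Printing Implicit Defensive.
Import Order.TTheory GRing.Theory Num.Theory.
Local Open Scope ring_scope.

(* Every global maximizer Xs stays sandwiched X_t <= Xs <= Y_t along the procedure.
   If u is added because F(u | Y - u) > 0 but u is not in Xs, quasi-submodularity
   applied to u + Xs and Y - u (meet Xs, join Y) together with F(Xs) >= F(u + Xs)
   forces F(Y - u) >= F(Y), a contradiction.  Dually, if d in Xs is removed because
   F(d | X) < 0, the strict half applied to d + X and Xs - d (meet X, join Xs)
   gives F(Xs - d) > F(Xs), contradicting maximality. *)

Lemma setU1ID1 (T : finType) (u : T) (A B : {set T}) :
  u \notin A -> A \subset B -> (u |: A) :&: (B :\ u) = A.
Proof.
move=> uA sAB; apply/setP => i; rewrite !inE.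
case: (eqVneq i u) => [->|_] /=; first by rewrite (negbTE uA).
by case iA: (i \in A); rewrite ?(subsetP sAB _ iA).
Qed.

Lemma setU1UD1 (T : finType) (u : T) (A B : {set T}) :
  u \in B -> A \subset B -> (u |: A) :|: (B :\ u) = B.
Proof.
move=> uB sAB; apply/setP => i; rewrite !inE.
case: (eqVneq i u) => [->|_] /=; first by rewrite uB.
by case iA: (i \in A); rewrite ?(subsetP sAB _ iA).
Qed.

Section MaximizerSandwich.

Variables (T : finType) (R : numDomainType) (F : {set T} -> R).
Hypothesis qsF : quasi_submodular F.
Variable Xs : {set T}.
Hypothesis maxXs : is_global_max F Xs.

Lemma global_max_mem_gain (Y : {set T}) (u : T) :
  Xs \subset Y -> u \in Y -> marg F u (Y :\ u) > 0 -> u \in Xs.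
Proof.
move=> sXsY uY; rewrite /marg setD1K // subr_gt0 => gain.
apply/negPn/negP => uXs.
have [+ _] := qsF (u |: Xs) (Y :\ u).
rewrite setU1ID1 // setU1UD1 // => /(_ (maxXs _)).
by rewrite (lt_geF gain).
Qed.

Lemma global_max_notin_loss (X : {set T}) (d : T) :
  X \subset Xs -> d \notin X -> marg F d X < 0 -> d \notin Xs.
Proof.
move=> sXXs dX; rewrite /marg subr_lt0 => loss.
apply/negP => dXs.
have [_ +] := qsF (d |: X) (Xs :\ d).
rewrite setU1ID1 // setU1UD1 // => /(_ loss) /lt_geF.
by rewrite maxXs.
Qed.

Lemma proc_step_sandwich (X Y : {set T}) :
  X \subset Xs -> Xs \subset Y ->
  (proc_step F (X, Y)).1 \subset Xs /\ Xs \subset (proc_step F (X, Y)).2.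
Proof.
move=> sXXs sXsY; split.
- rewrite subUset sXXs /=; apply/subsetP => u.
  rewrite !inE => /andP[/andP[_ uY]]; exact: global_max_mem_gain.
- apply/subsetP => d dXs; rewrite in_setD (subsetP sXsY _ dXs) andbT.
  apply/negP; rewrite !inE /= => /andP[/andP[dX _] loss].
  by have := global_max_notin_loss sXXs dX loss; rewrite dXs.
Qed.

Lemma proc_iter_sandwich (t : nat) :
  (proc_iter F t).1 \subset Xs /\ Xs \subset (proc_iter F t).2.
Proof.
elim: t => [|t IH]; first by rewrite /= sub0set subsetT.
rewrite /proc_iter iterS -/(proc_iter F t).
by case: (proc_iter F t) IH => X Y [sXXs sXsY]; exact: proc_step_sandwich.
Qed.

End MaximizerSandwich.

Theorem theorem2 (R : realType) (n : nat) (F : {set 'I_n} -> R)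
  (Xp Yp : {set 'I_n}) :
  quasi_submodular F ->
  proc_outputs F Xp Yp ->
  forall Xs : {set 'I_n}, is_global_max F Xs ->
  Xp \subset Xs /\ Xs \subset Yp.
Proof.
move=> qsF [t [ht _]] Xs maxXs.
by have := proc_iter_sandwich qsF maxXs t; rewrite ht.
Qed.
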